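(* For every formula $\varphi$ of $\mathcal{L}$: (a) $\vdash_{\mathbf{DFD}^\tau}\bigcirc\varphi\leftrightarrow\varphi[v_1/\bigcirc v_1,\dots,v_N/\bigcirc v_N]$; (b) $\vdash_{\mathbf{DFD}^\tau}\varphi\leftrightarrow\mathfrak{T}(\varphi)$.
   Context: Vocabulary: finite set $V=\{v_1,\dots,v_N\}$ of basic variables and predicate symbols with arities. Terms: $v\in V$, and $\bigcirc x$ for a term $x$. Formulas of $\mathcal{L}$: $P(x_1,\dots,x_k)$, $\neg\varphi$, $\varphi\wedge\psi$, $\bigcirc\varphi$, $\mathsf{D}_X\varphi$, $D_Xy$ ($X$ a finite, possibly empty, set of terms). $\bigcirc X=\{\bigcirc x:x\in X\}$, $D_XY:=\bigwedge_{y\in Y}D_Xy$. $\varphi[v_1/\bigcirc v_1,\dots,v_N/\bigcirc v_N]$ is the formula obtained from $\varphi$ by replacing every occurrence of each basic variable $v_i$ (inside every term) by $\bigcirc v_i$. $\mathfrak{T}$ is the translation that leaves atoms $P(x_1,\dots,x_k)$ and $D_Xy$ unchanged, commutes with $\neg,\wedge$ and each $\mathsf{D}_X$, and sets $\mathfrak{T}(\bigcirc\varphi)=\mathfrak{T}(\varphi)[v_1/\bigcirc v_1,\dots,v_N/\bigcirc v_N]$. Proof system $\mathbf{DFD}^\tau$: all propositional tautologies and modus ponens; $\bigcirc(\varphi\to\psi)\to(\bigcirc\varphi\to\bigcirc\psi)$; $\bigcirc\neg\varphi\leftrightarrow\neg\bigcirc\varphi$; $\mathsf{D}_X(\varphi\to\psi)\to(\mathsf{D}_X\varphi\to\mathsf{D}_X\psi)$;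 $P(x_1,\dots,x_n)\to\mathsf{D}_{\{x_1,\dots,x_n\}}P(x_1,\dots,x_n)$; $D_Xy\to\mathsf{D}_XD_Xy$; $\mathsf{D}_X\varphi\to\varphi$; $\mathsf{D}_X\varphi\to\mathsf{D}_X\mathsf{D}_X\varphi$; $\neg\mathsf{D}_X\varphi\to\mathsf{D}_X\neg\mathsf{D}_X\varphi$; rule: from $\varphi$ infer $\mathsf{D}_X\varphi$; $D_Xx$ for $x\in X$; $D_XY\wedge D_YZ\to D_XZ$; $D_V\bigcirc v$ for $v\in V$; $D_XY\wedge\mathsf{D}_Y\varphi\to\mathsf{D}_X\varphi$; $\bigcirc P(x_1,\dots,x_k)\leftrightarrow P(\bigcirc x_1,\dots,\bigcirc x_k)$; $\bigcirc\mathsf{D}_X\varphi\leftrightarrow\mathsf{D}_{\bigcirc X}\bigcirc\varphi$; $\bigcirc D_Xy\leftrightarrow D_{\bigcirc X}\bigcirc y$; rule: from $\varphi$ infer $\bigcirc\varphi$. *)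

From HB Require Import structures.
From mathcomp Require Import all_boot.
From mathcomp Require Import finmap.
Set Implicit Arguments. Unset Strict Implicit. Unset Printing Implicit Defensive.
Local Open Scope fset_scope.

Section DFD.
Variable N : nat.
Variable Pred : finType.
Variable arity : Pred -> nat.

(* A term is  O^n v_i  (n applications of the "next" operator to the basic
   variable v_i); we represent it by the pair (i, n). *)
Definition term := ('I_N * nat)%type.
Definition tvar (i : 'I_N) : term := (i, 0).
Definition tnext (t : term) : term := (t.1, t.2.+1).
Definition snext (X : {fset term}) : {fset term} := [fset tnext x | x in X].

Inductive form : Type :=
| Atom (P : Pred) (xs : (arity P).-tuple term)
| Neg (f : form)
| And (f g : form)
| Nxt (f : form)
| Box (X : {fset term}) (f : form)               (* sf D_X phi *)
| Dep (X : {fset term}) (y : term).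

Definition imp (f g : form) : form := Neg (And f (Neg g)).
Definition iff (f g : form) : form := And (imp f g) (imp g f).

(* Propositional tautologies: true under every boolean valuation of the
   non-Boolean subformulas. *)
Fixpoint tv (v : form -> bool) (f : form) : bool :=
  match f with
  | Neg g => ~~ tv v g
  | And g h => tv v g && tv v h
  | _ => v f
  end.
Definition taut (f : form) : Prop := forall v, tv v f.

(* D_X Y = /\_{y in Y} D_X y ; None encodes the empty conjunction (Top). *)
Fixpoint bigand (l : seq form) : option form :=
  match l with
  | [::] => None
  | [:: f] => Some f
  | f :: l' => match bigand l' with None => Some f | Some g => Some (And f g) end
  end.
Definition DXY (X Y : {fset term}) : option form :=
  bigand [seq Dep X y | y <- enum_fset Y].
Definition andT (a : option form) (b : form) : form :=
  match a with None => b | Some a => And a b end.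

Definition andO (a b : option form) : option form :=
  match a, b with
  | None, _ => b
  | Some a, None => Some a
  | Some a, Some b => Some (And a b)
  end.
Definition impT (a : option form) (c : form) : form :=
  match a with None => c | Some a => imp a c end.

Definition Vset : {fset term} := [fset tvar i | i : 'I_N].

(* phi[v_1 / O v_1, ..., v_N / O v_N] : every term x inside phi becomes O x *)
Fixpoint shift (f : form) : form :=
  match f with
  | Atom P xs => Atom (map_tuple tnext xs)
  | Neg g => Neg (shift g)
  | And g h => And (shift g) (shift h)
  | Nxt g => Nxt (shift g)
  | Box X g => Box (snext X) (shift g)
  | Dep X y => Dep (snext X) (tnext y)
  end.

Fixpoint transl (f : form) : form :=
  match f with
  | Atom P xs => Atom xs
  | Neg g => Neg (transl g)
  | And g h => And (transl g) (transl h)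
  | Nxt g => shift (transl g)
  | Box X g => Box X (transl g)
  | Dep X y => Dep X y
  end.

Inductive prov : form -> Prop :=
| ax_taut f : taut f -> prov f
| r_mp f g : prov (imp f g) -> prov f -> prov g
| ax_Knext f g : prov (imp (Nxt (imp f g)) (imp (Nxt f) (Nxt g)))
| ax_next_neg f : prov (iff (Nxt (Neg f)) (Neg (Nxt f)))
| ax_KD X f g : prov (imp (Box X (imp f g)) (imp (Box X f) (Box X g)))
| ax_atom_D P (xs : (arity P).-tuple term) :
    prov (imp (Atom xs) (Box [fset x | x in (xs : seq term)] (Atom xs)))
| ax_dep_D X y : prov (imp (Dep X y) (Box X (Dep X y)))
| ax_T X f : prov (imp (Box X f) f)
| ax_4 X f : prov (imp (Box X f) (Box X (Box X f)))
| ax_5 X f : prov (imp (Neg (Box X f)) (Box X (Neg (Box X f))))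
| r_nec X f : prov f -> prov (Box X f)
| ax_refl X x : x \in X -> prov (Dep X x)
| ax_trans X Y Z c : DXY X Z = Some c ->
    prov (impT (andO (DXY X Y) (DXY Y Z)) c)
| ax_V (i : 'I_N) : prov (Dep Vset (tnext (tvar i)))
| ax_transfer X Y f : prov (impT (andO (DXY X Y) (Some (Box Y f))) (Box X f))
| ax_next_atom P (xs : (arity P).-tuple term) :
    prov (iff (Nxt (Atom xs)) (Atom (map_tuple tnext xs)))
| ax_next_D X f : prov (iff (Nxt (Box X f)) (Box (snext X) (Nxt f)))
| ax_next_dep X y : prov (iff (Nxt (Dep X y)) (Dep (snext X) (tnext y)))
| r_nec_next f : prov f -> prov (Nxt f).

End DFD.

From mathcomp Require Import all_boot finmap.

Set Implicit Arguments.
Unset Strict Implicit.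

(* For (a), the interaction
   axioms of [O] with atoms, [D_X], dependence atoms and negation handle all
   cases but conjunction, and [O] distributes over [/\] by K and
   necessitation for [O].  For (b), the only nontrivial case is
   [T(O g) = (T g)[v/Ov]]: congruence of [O] under provable equivalence turns
   the induction hypothesis into [O g <-> O (T g)], and (a) applied to [T g]
   finishes. *)

Section DerivedRules.
Variables (N : nat) (Pred : finType) (arity : Pred -> nat).
Notation form := (form N arity).
Notation prov := (@prov N Pred arity).

Ltac prove_taut :=
  apply: ax_taut => v /=;
  repeat match goal with |- context [tv ?w ?a] => case: (tv w a) end.

Lemma mp2 (a b c : form) : prov (imp a (imp b c)) -> prov a -> prov b -> prov c.
Proof. by move=> hab ha hb; apply: r_mp (r_mp hab ha) hb. Qed.

Lemma iff_intro (a b : form) :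
  prov (imp a b) -> prov (imp b a) -> prov (iff a b).
Proof. by apply: mp2; prove_taut. Qed.

Lemma iffLR (a b : form) : prov (iff a b) -> prov (imp a b).
Proof. by apply: r_mp; prove_taut. Qed.

Lemma iffRL (a b : form) : prov (iff a b) -> prov (imp b a).
Proof. by apply: r_mp; prove_taut. Qed.

Lemma iff_refl (a : form) : prov (iff a a).
Proof. by prove_taut. Qed.

Lemma iff_trans (a b c : form) :
  prov (iff a b) -> prov (iff b c) -> prov (iff a c).
Proof. by apply: mp2; prove_taut. Qed.

Lemma neg_cong (a b : form) : prov (iff a b) -> prov (iff (Neg a) (Neg b)).
Proof. by apply: r_mp; prove_taut. Qed.

Lemma and_cong (a b c d : form) :
  prov (iff a b) -> prov (iff c d) -> prov (iff (And a c) (And b d)).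
Proof. by apply: mp2; prove_taut. Qed.

Lemma and_intro_imp (c a b : form) :
  prov (imp c a) -> prov (imp c b) -> prov (imp c (And a b)).
Proof. by apply: mp2; prove_taut. Qed.

Lemma and_elim_imp (a b c d : form) :
  prov (imp a b) -> prov (imp b (imp c d)) -> prov (imp (And a c) d).
Proof. by apply: mp2; prove_taut. Qed.

Lemma nxt_imp (a b : form) : prov (imp a b) -> prov (imp (Nxt a) (Nxt b)).
Proof. by move=> hab; apply: r_mp (ax_Knext _ _) (r_nec_next hab). Qed.

Lemma box_imp X (a b : form) :
  prov (imp a b) -> prov (imp (Box X a) (Box X b)).
Proof. by move=> hab; apply: r_mp (ax_KD _ _ _) (r_nec X hab). Qed.

Lemma nxt_cong (a b : form) : prov (iff a b) -> prov (iff (Nxt a) (Nxt b)).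
Proof.
by move=> hab; apply: iff_intro; apply: nxt_imp; [apply: iffLR hab | apply: iffRL hab].
Qed.

Lemma box_cong X (a b : form) :
  prov (iff a b) -> prov (iff (Box X a) (Box X b)).
Proof.
by move=> hab; apply: iff_intro; apply: box_imp; [apply: iffLR hab | apply: iffRL hab].
Qed.

Lemma nxt_and (a b : form) : prov (iff (Nxt (And a b)) (And (Nxt a) (Nxt b))).
Proof.
apply: iff_intro.
  by apply: and_intro_imp; apply: nxt_imp; prove_taut.
have nxt_pair : prov (imp (Nxt a) (Nxt (imp b (And a b)))).
  by apply: nxt_imp; prove_taut.
exact: and_elim_imp nxt_pair (ax_Knext b (And a b)).
Qed.

Lemma nxt_shift (phi : form) : prov (iff (Nxt phi) (shift phi)).
Proof.
elim: phi => [P xs|g IHg|g IHg h IHh|g IHg|X g IHg|X y] /=.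
- exact: ax_next_atom.
- by apply: iff_trans (ax_next_neg g) _; apply: neg_cong.
- by apply: iff_trans (nxt_and g h) _; apply: and_cong.
- exact: nxt_cong.
- by apply: iff_trans (ax_next_D X g) _; apply: box_cong.
- exact: ax_next_dep.
Qed.

Lemma transl_equiv (phi : form) : prov (iff phi (transl phi)).
Proof.
elim: phi => [P xs|g IHg|g IHg h IHh|g IHg|X g IHg|X y] /=.
- exact: iff_refl.
- exact: neg_cong.
- exact: and_cong.
- exact: iff_trans (nxt_cong IHg) (nxt_shift (transl g)).
- exact: box_cong.
- exact: iff_refl.
Qed.

End DerivedRules.

Theorem fact5p4 (N : nat) (Pred : finType) (arity : Pred -> nat)
  (phi : form N arity) :
  prov (iff (Nxt phi) (shift phi)) /\ prov (iff phi (transl phi)).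
Proof. by split; [apply: nxt_shift | apply: transl_equiv]. Qed.
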